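(* In every $L_{SR}$-structure satisfying AxEv, AxSTL and AxRR: if $\alpha,\beta$ are signals with $\mathrm{Beg}(\alpha)=\mathrm{Beg}(\beta)$ and $\mathrm{End}(\alpha)=\mathrm{End}(\beta)$, then $\alpha=\beta$.
   Context: Language $L_{SR}$: first-order, two-sorted, with sorts ''observers'' (variables $a,b,c,\dots$) and ''signals'' (variables $\alpha,\beta,\gamma,\dots$), equality, and binary relation symbols $T$ (''$a$ transmits $\alpha$'') and $R$ (''$a$ receives $\alpha$'') between observers and signals. Definitions: - $\mathrm{Ev}(\alpha)\equiv\forall a(aT\alpha\Leftrightarrow aR\alpha)$. - $M(a,b)\equiv\exists\alpha(aT\alpha\wedge bT\alpha)$. - $\mathrm{Cop}(a,b)\equiv\exists c,d\,(c\ne d\wedge M(a,c)\wedge M(c,b)\wedge M(d,b)\wedge M(d,a)\wedge\exists\gamma(cT\gamma\wedge dT\gamma\wedge\neg aT\gamma\wedge\neg bT\gamma))$. - $a\|b\equiv(\mathrm{Cop}(a,b)\wedge\neg M(a,b))\vee a=b$. - $\alpha=\mathrm{Beg}(\beta)\equiv\mathrm{Ev}(\alpha)\wedge\forall a(aT\beta\Leftrightarrow aT\alpha)$; $\alpha=\mathrm{End}(\beta)\equiv\mathrm{Ev}(\alpha)\wedge\forall a(aR\beta\Leftrightarrow aT\alpha)$. (Equations such as $\mathrm{Beg}(\alpha)=\mathrm{Beg}(\beta)$ mean there is an event equal to both.) - $\mathrm{STL}(a)\equiv\forall\gamma[\mathrm{Ev}(\gamma)\Rightarrow\exists!\beta(\mathrm{Beg}(\beta)=\gamma\wedge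 aR\beta)]$. Axioms: - AxEv: $\forall\alpha\exists ab\beta\gamma[aT\alpha\wedge bR\alpha\wedge\beta=\mathrm{Beg}(\alpha)\wedge\gamma=\mathrm{End}(\alpha)]$. - AxSTL: $\exists a\,\mathrm{STL}(a)\wedge\forall a,b[\mathrm{STL}(a)\wedge b\|a\Rightarrow\mathrm{STL}(b)]$. - AxRR: $\forall a\beta\exists b(bT\beta\wedge b\|a)$. *)

From Stdlib Require Import Classical.

(* An L_SR-structure: sorts of observers (Obs) and signals (Sig),
   with binary relations T ("a transmits alpha") and R ("a receives alpha").
   Equality is Leibniz equality on each sort. *)
Record LSR := mkLSR {
  Obs : Type;
  Sig : Type;
  Tr : Obs -> Sig -> Prop;
  Rc : Obs -> Sig -> Prop
}.

Section Defs.
Variable S : LSR.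
Local Notation T := (Tr S).
Local Notation R := (Rc S).

Definition Ev (al : Sig S) : Prop := forall a, T a al <-> R a al.

Definition M (a b : Obs S) : Prop := exists al, T a al /\ T b al.

Definition Cop (a b : Obs S) : Prop :=
  exists c d, c <> d /\ M a c /\ M c b /\ M d b /\ M d a /\
    exists ga, T c ga /\ T d ga /\ ~ T a ga /\ ~ T b ga.

Definition Par (a b : Obs S) : Prop := (Cop a b /\ ~ M a b) \/ a = b.

(* al = Beg(be) *)
Definition IsBeg (al be : Sig S) : Prop :=
  Ev al /\ forall a, T a be <-> T a al.

(* al = End(be) *)
Definition IsEnd (al be : Sig S) : Prop :=
  Ev al /\ forall a, R a be <-> T a al.

Definition STL (a : Obs S) : Prop :=
  forall ga, Ev ga ->
    exists be, (IsBeg ga be /\ R a be) /\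
      forall be', (IsBeg ga be' /\ R a be') -> be' = be.

Definition AxEv : Prop :=
  forall al, exists a b be ga, T a al /\ R b al /\ IsBeg be al /\ IsEnd ga al.

Definition AxSTL : Prop :=
  (exists a, STL a) /\ forall a b, STL a -> Par b a -> STL b.

Definition AxRR : Prop :=
  forall (a : Obs S) be, exists b, T b be /\ Par b a.

End Defs.


(* Let e be the common end event of al and be.  By AxSTL there
   is a slow-time-like observer a0, and by AxRR some observer b parallel to
   a0 transmits e; by the closure half of AxSTL, b is slow-time-like too.
   Since e = End(al) = End(be), every transmitter of e receives both al and
   be, so b receives both signals.  But al and be also share their beginning
   event g, and a slow-time-like observer receives exactly one signal
   starting at each event; hence al = be. *)

Section SlowTimeLikeSignals.
Variable S : LSR.

Lemma STL_transmitter :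
  AxSTL S -> AxRR S -> forall ga : Sig S, exists b, Tr S b ga /\ STL S b.
Proof.
  intros [[a0 STLa0] STL_closed] RR ga.
  destruct (RR a0 ga) as [b [Tbga Par_b_a0]].
  exists b; split; [exact Tbga | exact (STL_closed a0 b STLa0 Par_b_a0)].
Qed.

Lemma End_transmitter_receives (e al : Sig S) (b : Obs S) :
  IsEnd S e al -> Tr S b e -> Rc S b al.
Proof. intros [_ End_e] Tbe; apply End_e; exact Tbe. Qed.

Lemma STL_receiver_unique (b : Obs S) (g al be : Sig S) :
  STL S b -> IsBeg S g al -> IsBeg S g be ->
  Rc S b al -> Rc S b be -> al = be.
Proof.
  intros STLb Beg_al Beg_be Rbal Rbbe.
  destruct (STLb g (proj1 Beg_al)) as [x [_ x_unique]].
  rewrite (x_unique al (conj Beg_al Rbal)), (x_unique be (conj Beg_be Rbbe)).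
  reflexivity.
Qed.

End SlowTimeLikeSignals.

Theorem mainTheorem6 (S : LSR) :
  AxEv S -> AxSTL S -> AxRR S ->
  forall al be : Sig S,
    (exists e, IsBeg S e al /\ IsBeg S e be) ->
    (exists e, IsEnd S e al /\ IsEnd S e be) ->
    al = be.
Proof.
  intros _ AxSTL_S AxRR_S al be [g [Beg_al Beg_be]] [e [End_al End_be]].
  destruct (STL_transmitter S AxSTL_S AxRR_S e) as [b [Tbe STLb]].
  apply (STL_receiver_unique S b g al be STLb Beg_al Beg_be).
  - exact (End_transmitter_receives S e al b End_al Tbe).
  - exact (End_transmitter_receives S e be b End_be Tbe).
Qed.
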